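(* Consider the D2EAL algorithm (without periodic reset) described in the context with horizon $T\ge1$ and $\eta_\alpha,\eta_w>0$, and fix $i\in[N]$. Assume: (Assumption 1) $\Omega_i(t)\subseteq\Omega_i(t-1)$ for all $t=1,\dots,T$; (Assumption 2) $|l(x_1,y)-l(x_2,y)|\le L_1\|x_1-x_2\|$ for all $x_1,x_2\in\mathcal A$, $y\in\mathcal Y$, for some constant $L_1\ge0$; (Assumption 3) there are nonnegative numbers $\delta_1,\dots,\delta_T$ with $\|f_{t,k}-f_{t,j}\|\le\delta_t$ for all $k,j\in[N]$, $t=1,\dots,T$; (Assumption 4) with $i^*\in\arg\min_{j\in[N]}L_{T,j}$, one has $L_{T,i^*}\le c_0T^{1-\alpha}$ for some constants $c_0\ge0$ and $\alpha\in(0,1]$. Let $\Delta_o\ge\sum_{t=1}^T\delta_t$ and $j^*\in\arg\min_{j\in[N]}\bar L_{T,j}$. Then $$R_i^{GS}(T):=\hat L_{T,i}-\bar L_{T,j^*}\le\frac{\eta_wT}{8}+\frac{\log d_i(0)}{\eta_w}+\frac{\eta_\alpha T}{8}+\frac{\log2}{\eta_\alpha}+L_1\Delta_o+c_0T^{1-\alpha}.$$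
   Context: Setup. There are $N\ge 1$ agents indexed by $i\in[N]$ and a horizon $T\ge1$. The outcome space $\mathcal Y$ and action space $\mathcal A$ are convex subsets of $\mathbb R^n$, $\|\cdot\|$ is the Euclidean norm. The loss $l:\mathcal A\times\mathcal Y\to[0,1]$ is convex in its first argument. The target sequence $y_1,\dots,y_T\in\mathcal Y$ is arbitrary. For each agent $i$ and each $t\ge1$, an ''expert'' supplies an arbitrary prediction $f_{t,i}\in\mathcal A$ of $y_t$ (available at time $t-1$). Agents communicate over a time-varying undirected graph; $\Omega_i(t)$ is the set of neighbours of agent $i$ at time $t$, $\Lambda_i(t):=\Omega_i(t)\cup\{i\}$ and $d_i(t):=|\Lambda_i(t)|$. D2EAL (without periodic reset). Initialize $\hat f_{0,i}=f_{1,i}$, $\hat\alpha_i(0)=\hat\alpha'_i(0)=\hat w_{ii}(0)=1$ for all $i$. For $t=0,1,\dots,T-1$, each agent $i$ computes: $\alpha_i(t)=\hat\alpha_i(t)/(\hat\alpha_i(t)+\hat\alpha'_i(t))$; individual prediction $\bar f_{t+1,i}=\alpha_i(t)f_{t+1,i}+(1-\alpha_i(t))\hat f_{t,i}$; social weights $w_{ij}(t)=\hat w_{jj}(t)/\sum_{j'\in\Lambda_i(t)}\hat w_{j'j'}(t)$ for $j\in\Lambda_i(t)$ and $w_{ij}(t)=0$ otherwise; social prediction $\hat f_{t+1,i}=\sum_{j\in\Lambda_i(t)}w_{ij}(t)\bar f_{t+1,j}$. After $y_{t+1}$ is revealed, define the losses $l_{t+1,i}=l(f_{t+1,i},y_{t+1})$,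 $\hat l^-_{t+1,i}=l(\hat f_{t,i},y_{t+1})$, $\bar l_{t+1,i}=l(\bar f_{t+1,i},y_{t+1})$, $\hat l_{t+1,i}=l(\hat f_{t+1,i},y_{t+1})$, and update $\hat\alpha_i(t+1)=\hat\alpha_i(t)e^{-\eta_\alpha l_{t+1,i}}$, $\hat\alpha'_i(t+1)=\hat\alpha'_i(t)e^{-\eta_\alpha \hat l^-_{t+1,i}}$, $\hat w_{ii}(t+1)=\hat w_{ii}(t)e^{-\eta_w\bar l_{t+1,i}}$. Cumulative losses: $L_{T,i}=\sum_{t=1}^T l_{t,i}$, $\hat L^-_{T,i}=\sum_{t=1}^T\hat l^-_{t,i}$, $\bar L_{T,i}=\sum_{t=1}^T\bar l_{t,i}$, $\hat L_{T,i}=\sum_{t=1}^T\hat l_{t,i}$. *)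

From HB Require Import structures.
From mathcomp Require Import all_boot all_order all_algebra.
From mathcomp Require Import reals.
From mathcomp Require Import sequences exp.
Set Implicit Arguments. Unset Strict Implicit. Unset Printing Implicit Defensive.
Import Order.TTheory GRing.Theory Num.Theory.
Local Open Scope ring_scope.

Definition enorm (R : realType) (n : nat) (v : 'rV[R]_n) : R :=
  Num.sqrt (\sum_(k < n) v 0 k ^+ 2).

Definition convex_set (R : realType) (n : nat) (S : 'rV[R]_n -> Prop) : Prop :=
  forall x1 x2 (lam : R), S x1 -> S x2 -> 0 <= lam <= 1 ->
    S (lam *: x1 + (1 - lam) *: x2).

Definition Lam (N : nat) (Om : nat -> 'I_N -> {set 'I_N}) (t : nat) (i : 'I_N)
  : {set 'I_N} := i |: Om t i.

(* State of agent i after t rounds: hat f_{t,i}, hat alpha_i(t), hat alpha'_i(t), hat w_ii(t). *)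
Record st (R : realType) (n : nat) := St
  { st_f : 'rV[R]_n; st_a : R; st_a' : R; st_w : R }.

Definition alpha_of (R : realType) (n : nat) (s : st R n) : R :=
  st_a s / (st_a s + st_a' s).

(* individual prediction  bar f_{t+1,j} computed from the states at time t *)
Definition bar_of (R : realType) (n N : nat) (f : nat -> 'I_N -> 'rV[R]_n)
  (s : 'I_N -> st R n) (t : nat) (j : 'I_N) : 'rV[R]_n :=
  alpha_of (s j) *: f t.+1 j + (1 - alpha_of (s j)) *: st_f (s j).

Definition wgt (R : realType) (n N : nat) (Om : nat -> 'I_N -> {set 'I_N})
  (s : 'I_N -> st R n) (t : nat) (i j : 'I_N) : R :=
  if j \in Lam Om t i then st_w (s j) / \sum_(j' in Lam Om t i) st_w (s j') else 0.

Definition hat_of (R : realType) (n N : nat) (f : nat -> 'I_N -> 'rV[R]_n)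
  (Om : nat -> 'I_N -> {set 'I_N}) (s : 'I_N -> st R n) (t : nat) (i : 'I_N)
  : 'rV[R]_n :=
  \sum_(j in Lam Om t i) wgt Om s t i j *: bar_of f s t j.

Fixpoint d2eal (R : realType) (n N : nat) (l : 'rV[R]_n -> 'rV[R]_n -> R)
  (eta_a eta_w : R) (f : nat -> 'I_N -> 'rV[R]_n) (y : nat -> 'rV[R]_n)
  (Om : nat -> 'I_N -> {set 'I_N}) (t : nat) : 'I_N -> st R n :=
  match t with
  | 0 => fun i => St (f 1%N i) 1 1 1
  | t'.+1 =>
    let s := d2eal l eta_a eta_w f y Om t' in
    fun i => St (hat_of f Om s t' i)
                (st_a (s i) * expR (- (eta_a * l (f t'.+1 i) (y t'.+1))))
                (st_a' (s i) * expR (- (eta_a * l (st_f (s i)) (y t'.+1))))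
                (st_w (s i) * expR (- (eta_w * l (bar_of f s t' i) (y t'.+1))))
  end.

Definition hatf (R : realType) (n N : nat) (l : 'rV[R]_n -> 'rV[R]_n -> R)
  (eta_a eta_w : R) (f : nat -> 'I_N -> 'rV[R]_n) (y : nat -> 'rV[R]_n)
  (Om : nat -> 'I_N -> {set 'I_N}) (t : nat) (i : 'I_N) : 'rV[R]_n :=
  st_f (d2eal l eta_a eta_w f y Om t i).

(* bar f_{t,i}, for t >= 1 *)
Definition barf (R : realType) (n N : nat) (l : 'rV[R]_n -> 'rV[R]_n -> R)
  (eta_a eta_w : R) (f : nat -> 'I_N -> 'rV[R]_n) (y : nat -> 'rV[R]_n)
  (Om : nat -> 'I_N -> {set 'I_N}) (t : nat) (i : 'I_N) : 'rV[R]_n :=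
  bar_of f (d2eal l eta_a eta_w f y Om t.-1) t.-1 i.

Definition Lexp (R : realType) (n N : nat) (l : 'rV[R]_n -> 'rV[R]_n -> R)
  (f : nat -> 'I_N -> 'rV[R]_n) (y : nat -> 'rV[R]_n) (T : nat) (i : 'I_N) : R :=
  \sum_(1 <= t < T.+1) l (f t i) (y t).

Definition Lbar (R : realType) (n N : nat) (l : 'rV[R]_n -> 'rV[R]_n -> R)
  (eta_a eta_w : R) (f : nat -> 'I_N -> 'rV[R]_n) (y : nat -> 'rV[R]_n)
  (Om : nat -> 'I_N -> {set 'I_N}) (T : nat) (i : 'I_N) : R :=
  \sum_(1 <= t < T.+1) l (barf l eta_a eta_w f y Om t i) (y t).

Definition Lhat (R : realType) (n N : nat) (l : 'rV[R]_n -> 'rV[R]_n -> R)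
  (eta_a eta_w : R) (f : nat -> 'I_N -> 'rV[R]_n) (y : nat -> 'rV[R]_n)
  (Om : nat -> 'I_N -> {set 'I_N}) (T : nat) (i : 'I_N) : R :=
  \sum_(1 <= t < T.+1) l (hatf l eta_a eta_w f y Om t i) (y t).

From HB Require Import structures.
From mathcomp Require Import all_boot all_order all_algebra.
From mathcomp Require Import ring lra.
From mathcomp Require classical_sets.
From mathcomp Require Import reals topology normedtype derive.
From mathcomp Require Import realfun sequences exp interval_inference.
From mathcomp Require convex.
Set Implicit Arguments. Unset Strict Implicit. Unset Printing Implicit Defensive.
Import Order.TTheory GRing.Theory Num.Theory.
Import numFieldNormedType.Exports.
Local Open Scope ring_scope.

(* Both layers of D2EAL are exponentially weighted averages, and each is
   analysed by the classical potential argument.  For the social layer the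
   potential is the total weight of agent i's neighbourhood Lambda_i(t): it
   starts at d_i(0), can only lose terms by Assumption 1, and by Hoeffding's
   lemma shrinks in each round by at least exp(-eta_w hat l + eta_w^2/8),
   since convexity of the loss makes hat l at most the weighted mean of the
   neighbours' bar l; yet it dominates i's own weight exp(-eta_w bar L_{t,i}).
   The pair (hat alpha_i, hat alpha'_i) gives the same argument for the
   individual layer, with initial potential 2.  Adding the Lipschitz
   comparison of the experts (Assumptions 2-3) and Assumption 4 bounds
   hat L_{T,i} itself, which suffices because bar L_{T,j*} >= 0. *)

Section ExponentialWeights.
Import classical_sets.
Variable R : realType.

Lemma le_of_is_derive_ge0 (g dg : R -> R) (a b : R) :
  a <= b -> (forall x : R, is_derive x 1 g (dg x)) ->
  (forall x, a <= x <= b -> 0 <= dg x) -> g a <= g b.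
Proof.
move=> ab gdg dg0; rewrite -subr_ge0.
have gcont : {within `[a, b], continuous g}%classic.
  apply: continuous_subspaceT => x.
  by apply/differentiable_continuous/derivable1_diffP; case: (gdg x).
have [c cab ->] := MVT_segment ab (fun x _ => gdg x) gcont.
by rewrite in_itv /= in cab; rewrite mulr_ge0 ?subr_ge0 ?dg0.
Qed.

(* g vanishes at 0, g' = dg, dg 0 = 0 and dg' = (q - 1/2)^2 >= 0,
   so g >= 0 on [0, u]. *)
Lemma hoeffding_bernoulli (p u : R) : 0 <= p <= 1 -> 0 <= u ->
  1 - p + p * expR (- u) <= expR (- (u * p) + u ^+ 2 / 8).
Proof.
move=> /andP[p0 p1] u0.
pose D y := 1 - p + p * expR (- y).
have D_gt0 y : 0 < D y by have := expR_gt0 (- y); rewrite /D; nra.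
have D0 : D 0 = 1 by rewrite /D oppr0 expR0 mulr1 subrK.
pose q y := p * expR (- y) / D y.
pose g y := - (p * y) + y ^+ 2 / 8 - ln (D y).
pose dg y := - p + y / 4 + q y.
have Dd (y : R) : is_derive y 1 D (- (p * expR (- y))).
  by apply: is_derive_eq; rewrite /GRing.scale /=; ring.
have gd (y : R) : is_derive y 1 g (dg y).
  have lnD := is_derive1_comp (is_derive1_ln (D_gt0 y)) (Dd y).
  rewrite /g; apply: is_derive_eq.
  by rewrite /dg /q /GRing.scale /=; field; rewrite gt_eqF.
have dgd (y : R) : is_derive y 1 dg ((q y - 1 / 2) ^+ 2).
  have Dinv := is_deriveV (lt0r_neq0 (D_gt0 y)) (Dd y).
  have qd : is_derive y 1 q (q y ^+ 2 - q y).
    by rewrite /q; apply: is_derive_eq; rewrite /GRing.scale /=; field; rewrite gt_eqF.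
  by rewrite /dg; apply: is_derive_eq; rewrite /GRing.scale /=; field.
have dg0 : dg 0 = 0.
  by rewrite /dg /q D0 oppr0 expR0 mul0r invr1 !mulr1 addr0 addNr.
have dg_ge0 x : 0 <= x -> 0 <= dg x.
  move=> x0; rewrite -dg0.
  by apply: le_of_is_derive_ge0 dgd _ => // z _; exact: sqr_ge0.
have g0 : g 0 = 0 by rewrite /g D0 ln1; ring.
have : g 0 <= g u.
  by apply: le_of_is_derive_ge0 gd _ => // z /andP[z0 _]; exact: dg_ge0.
rewrite g0 /g => gu.
have -> : 1 - p + p * expR (- u) = expR (ln (D u)) by rewrite lnK //; exact: D_gt0.
by rewrite ler_expR; lra.
Qed.

Lemma expR_chord (e x : R) : 0 <= x <= 1 ->
  expR (- (e * x)) <= 1 - x + x * expR (- e).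
Proof.
move=> /andP[x0 x1].
have := convex_expR (Itv01 x0 x1) (- e) 0.
rewrite !convex.convRE /= expR0 mulr0 addr0 mulr1 mulrN mulrC => /le_trans; apply.
by rewrite addrC.
Qed.

Lemma sum_expR_mixture (I : Type) (r : seq I) (P : pred I) (c x : I -> R) (eta : R) :
  0 <= eta -> 0 < \sum_(j <- r | P j) c j ->
  (forall j, P j -> 0 <= c j) -> (forall j, P j -> 0 <= x j <= 1) ->
  \sum_(j <- r | P j) c j * expR (- (eta * x j)) <=
  (\sum_(j <- r | P j) c j) *
    expR (- (eta * ((\sum_(j <- r | P j) c j * x j) / \sum_(j <- r | P j) c j))
          + eta ^+ 2 / 8).
Proof.
set C := \sum_(j <- r | P j) c j; set M := \sum_(j <- r | P j) c j * x j.
move=> eta0 C_gt0 c0 x01.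
have M0 : 0 <= M.
  by apply: sumr_ge0 => j Pj; have /andP[x0 _] := x01 j Pj; rewrite mulr_ge0 ?c0.
have MC : M <= C.
  by apply: ler_sum => j Pj; have /andP[_ x1] := x01 j Pj; rewrite ler_piMr ?c0.
have m01 : 0 <= M / C <= 1.
  by rewrite divr_ge0 ?(ltW C_gt0) //= ler_pdivrMr // mul1r.
apply: le_trans (_ : C * (1 - M / C + M / C * expR (- eta)) <= _); last first.
  by apply: ler_wpM2l; [exact: ltW | exact: hoeffding_bernoulli].
have -> : C * (1 - M / C + M / C * expR (- eta)) =
          \sum_(j <- r | P j) c j * (1 - x j + x j * expR (- eta)).
  under [RHS]eq_bigr do rewrite mulrDr mulrBr mulr1 mulrA.
  rewrite big_split sumrB /= -mulr_suml -/C -/M.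
  by field; rewrite gt_eqF.
by apply: ler_sum => j Pj; rewrite ler_wpM2l ?c0 ?expR_chord ?x01.
Qed.

Lemma expR_mixture2 (a a' x x' eta : R) :
  0 <= eta -> 0 < a -> 0 < a' -> 0 <= x <= 1 -> 0 <= x' <= 1 ->
  a * expR (- (eta * x)) + a' * expR (- (eta * x')) <=
  (a + a') * expR (- (eta * (a / (a + a') * x + (1 - a / (a + a')) * x')) + eta ^+ 2 / 8).
Proof.
move=> eta0 a0 a'0 x01 x'01; have aa'0 : 0 < a + a' by exact: addr_gt0.
have -> : a / (a + a') * x + (1 - a / (a + a')) * x' = (a * x + a' * x') / (a + a').
  by field; rewrite gt_eqF.
have := @sum_expR_mixture _ [:: true; false] xpredT (fun b => if b then a else a')
  (fun b => if b then x else x') eta eta0.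
rewrite !big_cons !big_nil /= !addr0; apply=> //; first by case=> _; exact: ltW.
by case.
Qed.

Lemma exp_potential_telescope (a x : nat -> R) (eta : R) (T : nat) :
  (forall t, (t < T)%N -> a t.+1 <= a t * expR (- (eta * x t.+1) + eta ^+ 2 / 8)) ->
  a T <= a 0%N * expR (- (eta * \sum_(1 <= t < T.+1) x t) + T%:R * (eta ^+ 2 / 8)).
Proof.
elim: T => [|T IH] step.
  by rewrite big_geq // mulr0 oppr0 mul0r addr0 expR0 mulr1.
apply: le_trans (step T (ltnSn T)) _.
apply: le_trans (ler_wpM2r (ltW (expR_gt0 _)) (IH (fun t tT => step t (ltnW tT)))) _.
rewrite -mulrA -expRD addrACA (big_nat_recr T.+1) // -[T.+1%:R]natr1.
by rewrite mulrDr opprD mulrDl mul1r.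
Qed.

Lemma exp_potential_regret (a x : nat -> R) (eta L : R) (T : nat) :
  0 < eta -> 0 < a 0%N ->
  (forall t, (t < T)%N -> a t.+1 <= a t * expR (- (eta * x t.+1) + eta ^+ 2 / 8)) ->
  expR (- (eta * L)) <= a T ->
  \sum_(1 <= t < T.+1) x t - L <= eta * T%:R / 8 + ln (a 0%N) / eta.
Proof.
move=> eta0 a0 step /le_trans /(_ (exp_potential_telescope step)).
rewrite -{1}(lnK a0) -expRD ler_expR => h.
rewrite -(ler_pM2l eta0) mulrBr mulrDr (mulrC eta (ln _ / _)) divfK ?gt_eqF //.
by move: h; rewrite expr2; lra.
Qed.

End ExponentialWeights.

Section ConvexCombination.
Variables (R : realFieldType) (V : lmodType R).

Definition convex_on (A : V -> Prop) (g : V -> R) : Prop :=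
  forall x1 x2 (lam : R), A x1 -> A x2 -> 0 <= lam <= 1 ->
    g (lam *: x1 + (1 - lam) *: x2) <= lam * g x1 + (1 - lam) * g x2.

Lemma convex_comb_jensen (A : V -> Prop) (g : V -> R) (I : Type) (r : seq I)
    (c : I -> R) (x : I -> V) :
  (forall x1 x2 (lam : R), A x1 -> A x2 -> 0 <= lam <= 1 ->
     A (lam *: x1 + (1 - lam) *: x2)) ->
  convex_on A g -> (forall j, 0 < c j) -> \sum_(j <- r) c j = 1 ->
  (forall j, A (x j)) ->
  A (\sum_(j <- r) c j *: x j) /\
  g (\sum_(j <- r) c j *: x j) <= \sum_(j <- r) c j * g (x j).
Proof.
move=> convA convg; elim: r c => [|a r IH] c c_gt0.
  by rewrite big_nil => /eqP; rewrite eq_sym oner_eq0.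
rewrite !big_cons => c1 xA.
case: r IH c1 => [|b r] IH c1.
  by move: c1; rewrite !big_nil !addr0 => ->; rewrite scale1r mul1r.
set S := \sum_(j <- b :: r) c j in c1.
have S_gt0 : 0 < S.
  by rewrite /S big_cons ltr_pwDl // sumr_ge0 // => j _; exact: ltW.
have S1 : 1 - c a = S by rewrite -c1 addrC addKr.
have ca01 : 0 <= c a <= 1 by rewrite ltW //= -subr_ge0 S1 ltW.
have c'1 : \sum_(j <- b :: r) c j / S = 1 by rewrite -mulr_suml divff // gt_eqF.
have [zA zg] := IH (fun j => c j / S) (fun j => divr_gt0 (c_gt0 j) S_gt0) c'1 xA.
have -> : \sum_(j <- b :: r) c j *: x j =
          (1 - c a) *: \sum_(j <- b :: r) (c j / S) *: x j.
  rewrite S1 scaler_sumr; apply: eq_bigr => j _.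
  by rewrite scalerA mulrCA divff ?mulr1 // gt_eqF.
have -> : \sum_(j <- b :: r) c j * g (x j) =
          (1 - c a) * \sum_(j <- b :: r) c j / S * g (x j).
  rewrite S1 mulr_sumr; apply: eq_bigr => j _.
  by rewrite mulrA mulrCA divff ?mulr1 // gt_eqF.
split; first exact: convA.
apply: le_trans (convg _ _ _ (xA a) zA ca01) _.
by rewrite lerD2l ler_wpM2l // subr_ge0; case/andP: ca01.
Qed.

End ConvexCombination.

Lemma sumr_le_subset (R : numDomainType) (I : finType) (S S' : {set I}) (F : I -> R) :
  S \subset S' -> (forall j, 0 <= F j) -> \sum_(j in S) F j <= \sum_(j in S') F j.
Proof.
move=> SS' F0; rewrite [X in _ <= X](big_setID S) /= (setIidPr SS') lerDl.
exact: sumr_ge0.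
Qed.

Lemma alpha_of_itv01 (R : realType) (n : nat) (s : st R n) :
  0 < st_a s -> 0 < st_a' s -> 0 <= alpha_of s <= 1.
Proof.
move=> a0 a'0; have a_gt0 : 0 < st_a s + st_a' s by rewrite addr_gt0.
rewrite /alpha_of divr_ge0 ?(ltW a0) ?(ltW a_gt0) //=.
by rewrite ler_pdivrMr // mul1r lerDl (ltW a'0).
Qed.

Lemma Lexp_le_lipschitz (R : realType) (n N : nat) (A Y : 'rV[R]_n -> Prop)
    (l : 'rV[R]_n -> 'rV[R]_n -> R) (f : nat -> 'I_N -> 'rV[R]_n)
    (y : nat -> 'rV[R]_n) (T : nat) (L1 : R) (delta : nat -> R) (i k : 'I_N) :
  0 <= L1 -> (forall t j, A (f t j)) -> (forall t, Y (y t)) ->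
  (forall x1 x2 yy, A x1 -> A x2 -> Y yy ->
     `|l x1 yy - l x2 yy| <= L1 * enorm (x1 - x2)) ->
  (forall t j j', (1 <= t <= T)%N -> enorm (f t j - f t j') <= delta t) ->
  Lexp l f y T i <= Lexp l f y T k + L1 * \sum_(1 <= t < T.+1) delta t.
Proof.
move=> L1_ge0 fA yY lip fdist; rewrite /Lexp mulr_sumr -big_split /=.
apply: ler_sum_nat => t /andP[t1 tT].
have lk := lip _ _ _ (fA t i) (fA t k) (yY t).
have dk : L1 * enorm (f t i - f t k) <= L1 * delta t.
  by rewrite ler_wpM2l // fdist // t1 -ltnS.
have := ler_norm (l (f t i) (y t) - l (f t k) (y t)).
lra.
Qed.

Section D2EAL.
Variables (R : realType) (n N : nat) (A Y : 'rV[R]_n -> Prop).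
Variables (l : 'rV[R]_n -> 'rV[R]_n -> R) (eta_a eta_w : R).
Variables (f : nat -> 'I_N -> 'rV[R]_n) (y : nat -> 'rV[R]_n).
Variable Om : nat -> 'I_N -> {set 'I_N}.
Hypothesis convexA : convex_set A.
Hypothesis l_itv01 : forall x yy, A x -> Y yy -> 0 <= l x yy <= 1.
Hypothesis l_convex : forall yy, Y yy -> convex_on A (l^~ yy).
Hypothesis yY : forall t, Y (y t).
Hypothesis fA : forall t k, A (f t k).

Local Notation s := (d2eal l eta_a eta_w f y Om).

Lemma d2eal_a_gt0 t j : 0 < st_a (s t j).
Proof. by elim: t j => [|t IH] j /=; rewrite ?ltr01 // mulr_gt0 ?expR_gt0. Qed.

Lemma d2eal_a'_gt0 t j : 0 < st_a' (s t j).
Proof. by elim: t j => [|t IH] j /=; rewrite ?ltr01 // mulr_gt0 ?expR_gt0. Qed.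

Lemma d2eal_w_gt0 t j : 0 < st_w (s t j).
Proof. by elim: t j => [|t IH] j /=; rewrite ?ltr01 // mulr_gt0 ?expR_gt0. Qed.

Definition nbhd_weight t j := \sum_(k in Lam Om t j) st_w (s t k).

Lemma nbhd_weight_ge_self t j : st_w (s t j) <= nbhd_weight t j.
Proof.
rewrite /nbhd_weight (bigD1 j) ?setU11 //= lerDl.
by apply: sumr_ge0 => k _; exact: ltW (d2eal_w_gt0 t k).
Qed.

Lemma nbhd_weight_gt0 t j : 0 < nbhd_weight t j.
Proof. exact: lt_le_trans (d2eal_w_gt0 t j) (nbhd_weight_ge_self t j). Qed.

Lemma nbhd_weight0 j : nbhd_weight 0 j = #|Lam Om 0 j|%:R.
Proof. by rewrite /nbhd_weight sumr_const. Qed.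

Lemma bar_of_jensen t j yy : Y yy -> A (st_f (s t j)) ->
  A (bar_of f (s t) t j) /\
  l (bar_of f (s t) t j) yy <=
    alpha_of (s t j) * l (f t.+1 j) yy + (1 - alpha_of (s t j)) * l (st_f (s t j)) yy.
Proof.
move=> Yyy sA; have a01 := alpha_of_itv01 (d2eal_a_gt0 t j) (d2eal_a'_gt0 t j).
by split; [exact: convexA | exact: l_convex].
Qed.

Lemma hat_of_jensen t j yy : Y yy -> (forall k, A (bar_of f (s t) t k)) ->
  A (hat_of f Om (s t) t j) /\
  l (hat_of f Om (s t) t j) yy <=
    (\sum_(k in Lam Om t j) st_w (s t k) * l (bar_of f (s t) t k) yy) / nbhd_weight t j.
Proof.
move=> Yyy barA; have W0 := nbhd_weight_gt0 t j.
have -> : hat_of f Om (s t) t j =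
    \sum_(k <- enum (Lam Om t j)) (st_w (s t k) / nbhd_weight t j) *: bar_of f (s t) t k.
  by rewrite big_enum; apply: eq_bigr => k kL; rewrite /wgt kL.
rewrite mulr_suml -big_enum.
under [X in _ <= X]eq_bigr do rewrite mulrAC.
apply: (convex_comb_jensen (g := l^~ yy)) => //; first exact: l_convex.
- by move=> k; rewrite divr_gt0 ?d2eal_w_gt0.
- by rewrite big_enum -mulr_suml divff // gt_eqF.
Qed.

Lemma d2eal_f_mem t j : A (st_f (s t j)).
Proof.
elim: t j => [|t IH] j; first exact: fA.
exact: (hat_of_jensen j (yY 0) (fun k => (bar_of_jensen (yY 0) (IH k)).1)).1.
Qed.

Lemma bar_of_mem t j : A (bar_of f (s t) t j).
Proof. exact: (bar_of_jensen (yY 0) (d2eal_f_mem t j)).1. Qed.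

Lemma st_w_d2eal t j : st_w (s t j) = expR (- (eta_w * Lbar l eta_a eta_w f y Om t j)).
Proof.
elim: t => [|t IH]; first by rewrite /Lbar big_geq // mulr0 oppr0 expR0.
by rewrite /= IH /Lbar (big_nat_recr t.+1) //= mulrDr opprD expRD.
Qed.

Lemma st_a_d2eal t j : st_a (s t j) = expR (- (eta_a * Lexp l f y t j)).
Proof.
elim: t => [|t IH]; first by rewrite /Lexp big_geq // mulr0 oppr0 expR0.
by rewrite /= IH /Lexp (big_nat_recr t.+1) //= mulrDr opprD expRD.
Qed.

Lemma nbhd_weight_step t j : 0 <= eta_w -> Om t.+1 j \subset Om t j ->
  nbhd_weight t.+1 j <=
  nbhd_weight t j * expR (- (eta_w * l (st_f (s t.+1 j)) (y t.+1)) + eta_w ^+ 2 / 8).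
Proof.
move=> eta_w_ge0 shrink.
have LamS : Lam Om t.+1 j \subset Lam Om t j by rewrite setUS.
apply: le_trans (sumr_le_subset LamS (fun k => ltW (d2eal_w_gt0 t.+1 k))) _ => /=.
apply: le_trans (@sum_expR_mixture _ _ (index_enum _) (fun k => k \in Lam Om t j)
  (fun k => st_w (s t k)) (fun k => l (bar_of f (s t) t k) (y t.+1)) _ eta_w_ge0
  (nbhd_weight_gt0 t j) _ _) _.
- by move=> k _; exact: ltW (d2eal_w_gt0 t k).
- by move=> k _; exact: l_itv01 (bar_of_mem t k) (yY _).
rewrite -/(nbhd_weight t j) ler_pM2l ?nbhd_weight_gt0 // ler_expR lerD2r lerN2.
apply: ler_wpM2l => //.
exact: (hat_of_jensen j (yY _) (@bar_of_mem t)).2.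
Qed.

Lemma social_regret T j : 0 < eta_w ->
  (forall t, (t < T)%N -> Om t.+1 j \subset Om t j) ->
  Lhat l eta_a eta_w f y Om T j - Lbar l eta_a eta_w f y Om T j <=
  eta_w * T%:R / 8 + ln (#|Lam Om 0 j|%:R) / eta_w.
Proof.
move=> eta_w_gt0 shrink; rewrite -nbhd_weight0.
apply: (@exp_potential_regret _ (nbhd_weight^~ j)) => //.
- exact: nbhd_weight_gt0.
- by move=> t tT; apply: nbhd_weight_step (ltW _) (shrink t tT).
- by rewrite -st_w_d2eal nbhd_weight_ge_self.
Qed.

Definition alpha_weight t j := st_a (s t j) + st_a' (s t j).

Lemma alpha_weight_step t j : 0 <= eta_a ->
  alpha_weight t.+1 j <=
  alpha_weight t j * expR (- (eta_a * l (bar_of f (s t) t j) (y t.+1)) + eta_a ^+ 2 / 8).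
Proof.
move=> eta_a_ge0; have a0 := d2eal_a_gt0 t j; have a'0 := d2eal_a'_gt0 t j.
apply: le_trans (expR_mixture2 eta_a_ge0 a0 a'0
  (l_itv01 (fA _ _) (yY _)) (l_itv01 (d2eal_f_mem t j) (yY _))) _.
rewrite ler_pM2l ?addr_gt0 // ler_expR lerD2r lerN2; apply: ler_wpM2l => //.
exact: (bar_of_jensen (yY _) (d2eal_f_mem t j)).2.
Qed.

Lemma individual_regret T j : 0 < eta_a ->
  Lbar l eta_a eta_w f y Om T j - Lexp l f y T j <= eta_a * T%:R / 8 + ln 2 / eta_a.
Proof.
move=> eta_a_gt0.
have alpha_weight0 : alpha_weight 0 j = 2 by [].
rewrite -alpha_weight0; apply: (@exp_potential_regret _ (alpha_weight^~ j)) => //.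
- by rewrite alpha_weight0.
- by move=> t _; apply: alpha_weight_step (ltW _).
- by rewrite -st_a_d2eal /alpha_weight lerDl ltW ?d2eal_a'_gt0.
Qed.

Lemma Lbar_ge0 T j : 0 <= Lbar l eta_a eta_w f y Om T j.
Proof.
apply: sumr_ge0 => t _.
by have /andP[] := l_itv01 (bar_of_mem t.-1 j) (yY t).
Qed.

End D2EAL.

Theorem theorem2 (R : realType) (n N : nat)
  (A Y : 'rV[R]_n -> Prop) (l : 'rV[R]_n -> 'rV[R]_n -> R)
  (f : nat -> 'I_N -> 'rV[R]_n) (y : nat -> 'rV[R]_n)
  (Om : nat -> 'I_N -> {set 'I_N}) (T : nat) (eta_a eta_w : R) (i : 'I_N)
  (L1 : R) (delta : nat -> R) (c0 alpha Delta_o : R) (istar jstar : 'I_N) :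
  (* setting *)
  convex_set A -> convex_set Y ->
  (forall x yy, A x -> Y yy -> 0 <= l x yy <= 1) ->
  (forall yy, Y yy -> forall x1 x2 (lam : R), A x1 -> A x2 -> 0 <= lam <= 1 ->
     l (lam *: x1 + (1 - lam) *: x2) yy <= lam * l x1 yy + (1 - lam) * l x2 yy) ->
  (forall t, Y (y t)) ->
  (forall t k, A (f t k)) ->
  (forall t a b, (b \in Om t a) = (a \in Om t b)) ->
  (forall t a, a \notin Om t a) ->
  (1 <= T)%N -> 0 < eta_a -> 0 < eta_w ->
  (* Assumption 1 *)
  (forall t, (1 <= t <= T)%N -> Om t i \subset Om t.-1 i) ->
  (* Assumption 2 *)
  0 <= L1 ->
  (forall x1 x2 yy, A x1 -> A x2 -> Y yy ->
     `|l x1 yy - l x2 yy| <= L1 * enorm (x1 - x2)) ->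
  (* Assumption 3 *)
  (forall t, (1 <= t <= T)%N -> 0 <= delta t) ->
  (forall t k j, (1 <= t <= T)%N -> enorm (f t k - f t j) <= delta t) ->
  (* Assumption 4 *)
  (forall j, Lexp l f y T istar <= Lexp l f y T j) ->
  0 <= c0 -> 0 < alpha <= 1 ->
  Lexp l f y T istar <= c0 * (T%:R `^ (1 - alpha)) ->
  (* Delta_o and j^* *)
  \sum_(1 <= t < T.+1) delta t <= Delta_o ->
  (forall j, Lbar l eta_a eta_w f y Om T jstar <= Lbar l eta_a eta_w f y Om T j) ->
  Lhat l eta_a eta_w f y Om T i - Lbar l eta_a eta_w f y Om T jstar <=
    eta_w * T%:R / 8 + ln (#|Lam Om 0 i|%:R) / eta_w
    + eta_a * T%:R / 8 + ln 2 / eta_a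
    + L1 * Delta_o + c0 * (T%:R `^ (1 - alpha)).
Proof.
move=> convA _ l01 lconv yY fA _ _ _ eta_a_gt0 eta_w_gt0 shrink L1_ge0 lip _ fdist
  _ _ _ Listar deltaB _.
have social := social_regret eta_a convA l01 lconv yY fA eta_w_gt0
  (fun t (tT : (t < T)%N) => shrink t.+1 tT).
have indiv := individual_regret eta_w Om convA l01 lconv yY fA T i eta_a_gt0.
have experts := Lexp_le_lipschitz i istar L1_ge0 fA yY lip fdist.
have Lbar_jstar := Lbar_ge0 eta_a eta_w Om convA l01 lconv yY fA T jstar.
have deltaL1 : L1 * \sum_(1 <= t < T.+1) delta t <= L1 * Delta_o by rewrite ler_wpM2l.
lra.
Qed.
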